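(* The quantity $c^*_\infty=c^*_\infty(d,D,f'(0),g'(0))$, viewed as a function of $(d,D,f'(0),g'(0))\in(0,\infty)^4$, satisfies: (i) $\max\{c_f,c_g\}\leq c^*_\infty\leq 2\sqrt{\max\{D,d\}\max\{g'(0),f'(0)\}}$, and the last inequality is strict if and only if either ($D>d$ and $f'(0)>g'(0)$) or ($D<d$ and $f'(0)<g'(0)$); (ii) $c^*_\infty$ is continuous; (iii) for fixed $d,f'(0),g'(0)$, the map $D\mapsto c^*_\infty(D)$ is non-decreasing; (iv) $\lim_{D\to+\infty}c^*_\infty(D)/\sqrt D\in(0,+\infty)$.
   Context: For $D,d>0$ and $f'(0),g'(0)>0$: $c_f:=2\sqrt{df'(0)}$, $c_g:=2\sqrt{Dg'(0)}$, and $c^*_\infty:=c_f$ if $\frac{D}{d}\leq2-\frac{g'(0)}{f'(0)}$; $c^*_\infty:=c_g$ if $\frac{d}{D}\leq 2-\frac{f'(0)}{g'(0)}$; $c^*_\infty:=\frac{|Df'(0)-dg'(0)|}{\sqrt{(D-d)(f'(0)-g'(0))}}$ otherwise. (This is the asymptotic speed of propagation of the two-half-space system $u_t-D\Delta u=g(u)$ in $\{x_N<0\}$, $v_t-d\Delta v=f(v)$ in $\{x_N>0\}$, with exchange conditions $D\partial_{x_N}u=\nu v-\mu u$, $-d\partial_{x_N}v=\mu u-\nu v$ on $\{x_N=0\}$.) *)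

From Stdlib Require Import Reals Lra.
Open Scope R_scope.

(* Parameters: d, D > 0 diffusion coefficients; fp = f'(0) > 0, gp = g'(0) > 0. *)
Definition c_f (d fp : R) : R := 2 * sqrt (d * fp).
Definition c_g (D gp : R) : R := 2 * sqrt (D * gp).

Definition cstar_inf (d D fp gp : R) : R :=
  if Rle_dec (D / d) (2 - gp / fp) then c_f d fp
  else if Rle_dec (d / D) (2 - fp / gp) then c_g D gp
  else Rabs (D * fp - d * gp) / sqrt ((D - d) * (fp - gp)).

(** The speed [cstar_inf d D f'(0) g'(0)] is the largest of the KPP speeds
    [2 sqrt ((t d + (1-t) D) (t f'(0) + (1-t) g'(0)))], [0 <= t <= 1], of the problems
    with mixed coefficients: the product under the square root is a quadratic in [t],
    maximal at [t = 1], at [t = 0], or at its interior vertex, exactly according to the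
    three cases of the definition.  The endpoints give [c_f] and [c_g], and the mixed
    coefficients lie below the componentwise maxima, which gives (i).  Every mixed speed
    grows with [D], which gives (iii).  Since [|sqrt x - sqrt y| <= sqrt |x - y|], the
    mixed speeds depend uniformly continuously on the coefficients; this gives (ii), and,
    applied to the rescaled coefficients [(d/D, 1)] tending to [(0, 1)], also (iv). *)

From Stdlib Require Import Reals Lra Psatz.
Open Scope R_scope.

Definition is_max_on (S : R -> Prop) (u : R -> R) (m : R) : Prop :=
  (forall t, S t -> u t <= m) /\ (exists t, S t /\ u t = m).

Section MaxOn.
Variable S : R -> Prop.

Lemma is_max_on_le u v mu mv :
  is_max_on S u mu -> is_max_on S v mv -> (forall t, S t -> u t <= v t) -> mu <= mv.
Proof.
  intros [_ [t [St <-]]] [v_le _] uv. specialize (v_le t St). specialize (uv t St). lra.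
Qed.

Lemma is_max_on_le_bound u m c : is_max_on S u m -> (forall t, S t -> u t <= c) -> m <= c.
Proof. intros [_ [t [St <-]]] uc. exact (uc t St). Qed.

Lemma is_max_on_lt_bound u m c : is_max_on S u m -> (forall t, S t -> u t < c) -> m < c.
Proof. intros [_ [t [St <-]]] uc. exact (uc t St). Qed.

Lemma is_max_on_dist u v mu mv e :
  is_max_on S u mu -> is_max_on S v mv ->
  (forall t, S t -> Rabs (u t - v t) <= e) -> Rabs (mu - mv) <= e.
Proof.
  intros [u_le [tu [Stu <-]]] [v_le [tv [Stv <-]]] uv.
  pose proof (u_le tv Stv); pose proof (v_le tu Stu).
  pose proof (uv tu Stu) as uv_tu; pose proof (uv tv Stv) as uv_tv.
  apply Rabs_le. revert uv_tu uv_tv. unfold Rabs; do 2 destruct Rcase_abs; lra.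
Qed.

Lemma is_max_on_ext u v m :
  (forall t, S t -> u t = v t) -> is_max_on S u m -> is_max_on S v m.
Proof.
  intros uv [u_le [t [St <-]]]. split.
  - intros s Ss. rewrite <- (uv s Ss). exact (u_le s Ss).
  - exists t. split; [exact St | symmetry; exact (uv t St)].
Qed.

Lemma is_max_on_div u m k : 0 < k -> is_max_on S u m -> is_max_on S (fun t => u t / k) (m / k).
Proof.
  intros k_pos [u_le [t [St <-]]]. split.
  - intros s Ss. unfold Rdiv. apply Rmult_le_compat_r; [apply Rlt_le, Rinv_0_lt_compat, k_pos|].
    exact (u_le s Ss).
  - exists t. split; [exact St | reflexivity].
Qed.

End MaxOn.

(** No sign hypotheses: [sqrt] vanishes on negative reals. *)
Lemma sqrt_dist_le x y : Rabs (sqrt x - sqrt y) <= sqrt (Rabs (x - y)).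
Proof.
  assert (half : forall a b, sqrt a - sqrt b <= sqrt (Rabs (a - b))).
  { intros a b.
    pose proof (sqrt_pos a); pose proof (sqrt_pos b); pose proof (sqrt_pos (Rabs (a - b))).
    pose proof (sqrt_sqrt (Rabs (a - b)) (Rabs_pos _)).
    assert (sqrt a * sqrt a <= sqrt b * sqrt b + Rabs (a - b)).
    { destruct (Rle_or_lt 0 a) as [ha|ha];
        [rewrite sqrt_sqrt by exact ha|rewrite sqrt_neg_0 by lra];
      destruct (Rle_or_lt 0 b) as [hb|hb]; try (rewrite sqrt_sqrt by exact hb);
      try (rewrite (sqrt_neg_0 b) by lra); unfold Rabs; destruct Rcase_abs; lra. }
    nra. }
  apply Rabs_le; split; [|apply half].
  rewrite Rabs_minus_sym. pose proof (half y x). lra.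
Qed.

Lemma two_sqrt_lt x e : 0 <= x -> 0 < e -> 4 * x < e ^ 2 -> 2 * sqrt x < e.
Proof.
  intros x_ge0 e_pos x_lt. pose proof (sqrt_pos x). pose proof (sqrt_sqrt x x_ge0). nra.
Qed.

Lemma two_sqrt_sqr_div x K : 0 < K -> 2 * sqrt (x ^ 2 / (4 * K)) = Rabs x / sqrt K.
Proof.
  intros K_pos.
  rewrite sqrt_div_alt by lra. rewrite sqrt_mult_alt by lra.
  rewrite <- pow2_abs, sqrt_pow2 by apply Rabs_pos.
  replace 4 with (2 ^ 2) by ring. rewrite sqrt_pow2 by lra.
  field. apply Rgt_not_eq, sqrt_lt_R0, K_pos.
Qed.

Lemma amgm_le x y z : 0 <= x -> 0 <= y -> x + y <= 2 * z -> x * y <= z * z.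
Proof.
  intros. assert (0 <= (2 * z - (x + y)) * (2 * z + (x + y))) by (apply Rmult_le_pos; lra).
  pose proof (pow2_ge_0 (x - y)). nra.
Qed.

Lemma Rabs_mult_sub_le x y x0 y0 e a b :
  Rabs (x - x0) <= e -> Rabs (y - y0) <= e -> Rabs x0 <= a -> Rabs y0 <= b -> e <= 1 ->
  Rabs (x * y - x0 * y0) <= e * (a + b + 1).
Proof.
  intros hx hy hx0 hy0 e_le1.
  replace (x * y - x0 * y0) with ((x - x0) * (y - y0) + (x - x0) * y0 + x0 * (y - y0)) by ring.
  pose proof (Rabs_pos (x - x0)); pose proof (Rabs_pos (y - y0)).
  pose proof (Rabs_pos x0); pose proof (Rabs_pos y0).
  eapply Rle_trans; [apply Rabs_triang|]. rewrite Rabs_mult.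
  eapply Rle_trans; [apply Rplus_le_compat_r, Rabs_triang|]. rewrite !Rabs_mult.
  nra.
Qed.

Definition unit_interval (t : R) : Prop := 0 <= t <= 1.

Definition mix (a b t : R) : R := t * a + (1 - t) * b.

Definition mixed_speed (d D fp gp t : R) : R := c_f (mix d D t) (mix fp gp t).

Lemma mix_1 a b : mix a b 1 = a.
Proof. unfold mix. ring. Qed.

Lemma mix_0 a b : mix a b 0 = b.
Proof. unfold mix. ring. Qed.

Lemma mix_swap a b t : mix a b t = mix b a (1 - t).
Proof. unfold mix. ring. Qed.

Lemma mix_nonneg a b t : unit_interval t -> 0 <= a -> 0 <= b -> 0 <= mix a b t.
Proof. unfold unit_interval, mix. intros. nra. Qed.

Lemma mix_le_max a b t : unit_interval t -> mix a b t <= Rmax a b.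
Proof.
  unfold unit_interval, mix. intros.
  pose proof (Rmax_l a b); pose proof (Rmax_r a b). nra.
Qed.

Lemma mix_le_mix_r a b b' t : unit_interval t -> b <= b' -> mix a b t <= mix a b' t.
Proof. unfold unit_interval, mix. intros. nra. Qed.

Lemma Rabs_mix_le a b t e : unit_interval t -> Rabs a <= e -> Rabs b <= e -> Rabs (mix a b t) <= e.
Proof.
  unfold unit_interval, mix. intros [t0 t1] ha hb.
  eapply Rle_trans; [apply Rabs_triang|]. rewrite !Rabs_mult.
  rewrite (Rabs_pos_eq t), (Rabs_pos_eq (1 - t)) by lra. nra.
Qed.

Lemma mix_dist_le a b a0 b0 t e : unit_interval t ->
  Rabs (a - a0) <= e -> Rabs (b - b0) <= e -> Rabs (mix a b t - mix a0 b0 t) <= e.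
Proof.
  intros. replace (mix a b t - mix a0 b0 t) with (mix (a - a0) (b - b0) t) by (unfold mix; ring).
  apply Rabs_mix_le; assumption.
Qed.

Lemma mix_mult_lt a b r s t : unit_interval t -> 0 < a < b -> 0 < s < r ->
  mix a b t * mix r s t < b * r.
Proof.
  intros t_unit [a_pos ab] [s_pos sr].
  destruct (Req_dec t 0) as [->|t_nz].
  - rewrite !mix_0. apply Rmult_lt_compat_l; lra.
  - unfold unit_interval, mix in *.
    assert (t * a + (1 - t) * b < b) by nra.
    assert (0 < t * r + (1 - t) * s <= r) by nra.
    nra.
Qed.

Lemma c_f_le a r a' r' : 0 <= a <= a' -> 0 <= r <= r' -> c_f a r <= c_f a' r'.
Proof.
  intros. unfold c_f. apply Rmult_le_compat_l; [lra|]. apply sqrt_le_1_alt. nra.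
Qed.

Lemma c_f_lt a r a' r' : 0 <= a -> 0 <= r -> a * r < a' * r' -> c_f a r < c_f a' r'.
Proof.
  intros. unfold c_f. apply Rmult_lt_compat_l; [lra|]. apply sqrt_lt_1_alt. split; nra.
Qed.

Lemma c_f_div_sqrt a r k : 0 < k -> c_f a r / sqrt k = c_f (a / k) r.
Proof.
  intros. unfold c_f. replace (a / k * r) with (a * r / k) by (field; lra).
  rewrite sqrt_div_alt by assumption. unfold Rdiv. ring.
Qed.

Lemma mixed_speed_1 d D fp gp : mixed_speed d D fp gp 1 = c_f d fp.
Proof. unfold mixed_speed. rewrite !mix_1. reflexivity. Qed.

Lemma mixed_speed_0 d D fp gp : mixed_speed d D fp gp 0 = c_g D gp.
Proof. unfold mixed_speed. rewrite !mix_0. reflexivity. Qed.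

Lemma mixed_speed_div_sqrt d D fp gp k t : 0 < k ->
  mixed_speed d D fp gp t / sqrt k = mixed_speed (d / k) (D / k) fp gp t.
Proof.
  intros. unfold mixed_speed. rewrite c_f_div_sqrt by assumption.
  f_equal. unfold mix. field. lra.
Qed.

Lemma mixed_speed_dist_le d D fp gp d0 D0 fp0 gp0 e t :
  unit_interval t -> e <= 1 ->
  Rabs (d - d0) <= e -> Rabs (D - D0) <= e -> Rabs (fp - fp0) <= e -> Rabs (gp - gp0) <= e ->
  Rabs (mixed_speed d D fp gp t - mixed_speed d0 D0 fp0 gp0 t)
    <= 2 * sqrt (e * (Rabs d0 + Rabs D0 + (Rabs fp0 + Rabs gp0) + 1)).
Proof.
  intros t_unit e_le1 hd hD hfp hgp.
  unfold mixed_speed, c_f.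
  replace (2 * sqrt (mix d D t * mix fp gp t) - 2 * sqrt (mix d0 D0 t * mix fp0 gp0 t))
    with (2 * (sqrt (mix d D t * mix fp gp t) - sqrt (mix d0 D0 t * mix fp0 gp0 t))) by ring.
  rewrite Rabs_mult, Rabs_pos_eq by lra.
  apply Rmult_le_compat_l; [lra|].
  eapply Rle_trans; [apply sqrt_dist_le|]. apply sqrt_le_1_alt.
  pose proof (Rabs_pos d0); pose proof (Rabs_pos D0);
  pose proof (Rabs_pos fp0); pose proof (Rabs_pos gp0).
  apply Rabs_mult_sub_le; try apply mix_dist_le; try assumption;
    apply Rabs_mix_le; try assumption; lra.
Qed.

Lemma ratio_test_iff a b r s : 0 < a -> 0 < r ->
  (b / a <= 2 - s / r <-> b * r + a * s <= 2 * a * r).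
Proof.
  intros a_pos r_pos.
  assert (scaled : (2 - s / r - b / a) * (a * r) = 2 * a * r - (b * r + a * s)) by (field; lra).
  assert (0 < a * r) by nra.
  split; intros; nra.
Qed.

Section Branches.
Variables d D fp gp : R.

Lemma mixed_speed_max_of_product m :
  (forall t, unit_interval t -> mix d D t * mix fp gp t <= m) ->
  (exists t, unit_interval t /\ mix d D t * mix fp gp t = m) ->
  is_max_on unit_interval (mixed_speed d D fp gp) (2 * sqrt m).
Proof.
  intros le_m [t [t_unit eq_m]]. split.
  - intros s s_unit. unfold mixed_speed, c_f.
    apply Rmult_le_compat_l; [lra|]. apply sqrt_le_1_alt, le_m, s_unit.
  - exists t. split; [exact t_unit|]. unfold mixed_speed, c_f. rewrite eq_m. reflexivity.
Qed.

Lemma mixed_speed_max_f : 0 < d -> 0 <= D -> 0 < fp -> 0 <= gp ->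
  D * fp + d * gp <= 2 * d * fp -> is_max_on unit_interval (mixed_speed d D fp gp) (c_f d fp).
Proof.
  intros d_pos D_ge0 fp_pos gp_ge0 cond.
  assert (D * gp <= d * fp).
  { assert (D * fp * (d * gp) <= d * fp * (d * fp)) by (apply amgm_le; nra).
    assert (0 < d * fp) by nra. nra. }
  apply mixed_speed_max_of_product.
  - intros t [t0 t1]. unfold mix.
    set (B := D * fp + d * gp - 2 * D * gp). set (K := (D - d) * (fp - gp)).
    assert (expand : (t * d + (1 - t) * D) * (t * fp + (1 - t) * gp)
                     = d * fp - (1 - t) * (B - (1 + t) * K)) by (unfold B, K; ring).
    assert (B - (1 + t) * K >= 0) by (unfold B, K; nra).
    nra.
  - exists 1. split; [unfold unit_interval; lra|]. rewrite !mix_1. reflexivity.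
Qed.

Lemma mixed_speed_max_g : 0 <= d -> 0 < D -> 0 <= fp -> 0 < gp ->
  D * fp + d * gp <= 2 * D * gp -> is_max_on unit_interval (mixed_speed d D fp gp) (c_g D gp).
Proof.
  intros d_ge0 D_pos fp_ge0 gp_pos cond.
  assert (d * fp <= D * gp).
  { assert (D * fp * (d * gp) <= D * gp * (D * gp)) by (apply amgm_le; nra).
    assert (0 < D * gp) by nra. nra. }
  apply mixed_speed_max_of_product.
  - intros t [t0 t1]. unfold mix.
    set (B := D * fp + d * gp - 2 * D * gp). set (K := (D - d) * (fp - gp)).
    assert (expand : (t * d + (1 - t) * D) * (t * fp + (1 - t) * gp)
                     = D * gp + t * (B - t * K)) by (unfold B, K; ring).
    assert (B - t * K <= 0) by (unfold B, K; nra).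
    nra.
  - exists 0. split; [unfold unit_interval; lra|]. rewrite !mix_0. reflexivity.
Qed.

Lemma mixed_speed_max_front :
  2 * d * fp < D * fp + d * gp -> 2 * D * gp < D * fp + d * gp ->
  is_max_on unit_interval (mixed_speed d D fp gp)
    (Rabs (D * fp - d * gp) / sqrt ((D - d) * (fp - gp))).
Proof.
  intros condA condB.
  set (B := D * fp + d * gp - 2 * D * gp). set (K := (D - d) * (fp - gp)).
  assert (sum : 2 * K = (D * fp + d * gp - 2 * d * fp) + B) by (unfold B, K; ring).
  assert (B_pos : 0 < B) by (unfold B; lra).
  assert (K_pos : 0 < K) by lra.
  rewrite <- two_sqrt_sqr_div by exact K_pos.
  apply mixed_speed_max_of_product.
  - intros t _. unfold mix.
    assert (expand : (t * d + (1 - t) * D) * (t * fp + (1 - t) * gp)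
                     = (D * fp - d * gp) ^ 2 / (4 * K) - K * (t - B / (2 * K)) ^ 2)
      by (unfold B, K in *; field; nra).
    pose proof (pow2_ge_0 (t - B / (2 * K))). nra.
  - exists (B / (2 * K)). split.
    + unfold unit_interval. split.
      * apply Rlt_le, Rdiv_lt_0_compat; lra.
      * apply Rmult_le_reg_r with (2 * K); [lra|]. unfold Rdiv.
        rewrite Rmult_assoc, Rinv_l by lra. lra.
    + unfold mix, B, K in *. field. nra.
Qed.

End Branches.

Lemma cstar_inf_is_max d D fp gp : 0 < d -> 0 < D -> 0 < fp -> 0 < gp ->
  is_max_on unit_interval (mixed_speed d D fp gp) (cstar_inf d D fp gp).
Proof.
  intros d_pos D_pos fp_pos gp_pos. unfold cstar_inf.
  destruct (Rle_dec (D / d) (2 - gp / fp)) as [condA|condA];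
    [|destruct (Rle_dec (d / D) (2 - fp / gp)) as [condB|condB]];
    rewrite ratio_test_iff in condA by assumption;
    try rewrite ratio_test_iff in condB by assumption.
  - apply mixed_speed_max_f; lra.
  - apply mixed_speed_max_g; lra.
  - apply mixed_speed_max_front; lra.
Qed.

Lemma mixed_speed_has_max d D fp gp : 0 <= d -> 0 < D -> 0 < fp -> 0 < gp ->
  exists m, is_max_on unit_interval (mixed_speed d D fp gp) m.
Proof.
  intros d_ge0 D_pos fp_pos gp_pos.
  destruct (Rle_or_lt (D * fp + d * gp) (2 * D * gp)) as [condB|condB].
  - eexists. apply mixed_speed_max_g; lra.
  - destruct (Rle_or_lt (D * fp + d * gp) (2 * d * fp)) as [condA|condA].
    + eexists. apply mixed_speed_max_f; nra.
    + eexists. apply mixed_speed_max_front; lra.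
Qed.

Lemma cstar_inf_bounds d D fp gp : 0 < d -> 0 < D -> 0 < fp -> 0 < gp ->
  Rmax (c_f d fp) (c_g D gp) <= cstar_inf d D fp gp /\
  cstar_inf d D fp gp <= 2 * sqrt (Rmax D d * Rmax gp fp) /\
  (cstar_inf d D fp gp < 2 * sqrt (Rmax D d * Rmax gp fp) <->
     ((D > d /\ fp > gp) \/ (D < d /\ fp < gp))).
Proof.
  intros d_pos D_pos fp_pos gp_pos.
  pose proof (cstar_inf_is_max d D fp gp d_pos D_pos fp_pos gp_pos) as cmax.
  assert (c_f_le_c : c_f d fp <= cstar_inf d D fp gp).
  { rewrite <- (mixed_speed_1 d D fp gp). apply cmax. unfold unit_interval; lra. }
  assert (c_g_le_c : c_g D gp <= cstar_inf d D fp gp).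
  { rewrite <- (mixed_speed_0 d D fp gp). apply cmax. unfold unit_interval; lra. }
  split; [apply Rmax_lub; assumption|]. split; [|split].
  - apply (is_max_on_le_bound _ _ _ _ cmax). intros t t_unit.
    apply c_f_le; split; try (apply mix_nonneg; auto; lra);
      rewrite Rmax_comm; apply mix_le_max, t_unit.
  - intros c_lt.
    destruct (Rle_lt_dec D d) as [Dd|dD]; [destruct (Rle_lt_dec gp fp) as [gf|fg]|
                                            destruct (Rle_lt_dec fp gp) as [fg|gf]].
    + rewrite Rmax_right, Rmax_right in c_lt by lra.
      change (cstar_inf d D fp gp < c_f d fp) in c_lt. lra.
    + destruct (Req_dec D d) as [<-|D_ne]; [|right; lra].
      rewrite Rmax_left, Rmax_left in c_lt by lra.
      change (cstar_inf D D fp gp < c_g D gp) in c_lt. lra.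
    + rewrite Rmax_left, Rmax_left in c_lt by lra.
      change (cstar_inf d D fp gp < c_g D gp) in c_lt. lra.
    + left; lra.
  - intros [[dD gf]|[Dd fg]].
    + rewrite Rmax_left, Rmax_right by lra.
      apply (is_max_on_lt_bound _ _ _ _ cmax). intros t t_unit.
      apply c_f_lt; try (apply mix_nonneg; auto; lra).
      apply mix_mult_lt; auto.
    + rewrite Rmax_right, Rmax_left by lra.
      apply (is_max_on_lt_bound _ _ _ _ cmax). intros t t_unit.
      apply c_f_lt; try (apply mix_nonneg; auto; lra).
      rewrite (mix_swap d D), (mix_swap fp gp).
      apply mix_mult_lt; [unfold unit_interval in *|..]; lra.
Qed.

Lemma cstar_inf_continuous d0 D0 fp0 gp0 : 0 < d0 -> 0 < D0 -> 0 < fp0 -> 0 < gp0 ->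
  forall eps : R, 0 < eps -> exists delta : R, 0 < delta /\
    forall d D fp gp : R, 0 < d -> 0 < D -> 0 < fp -> 0 < gp ->
      Rabs (d - d0) < delta -> Rabs (D - D0) < delta ->
      Rabs (fp - fp0) < delta -> Rabs (gp - gp0) < delta ->
      Rabs (cstar_inf d D fp gp - cstar_inf d0 D0 fp0 gp0) < eps.
Proof.
  intros d0_pos D0_pos fp0_pos gp0_pos eps eps_pos.
  set (C := Rabs d0 + Rabs D0 + (Rabs fp0 + Rabs gp0) + 1).
  assert (C_pos : 0 < C) by (unfold C; pose proof (Rabs_pos d0); pose proof (Rabs_pos D0);
                             pose proof (Rabs_pos fp0); pose proof (Rabs_pos gp0); lra).
  set (delta := Rmin 1 (eps ^ 2 / (8 * C))).
  assert (delta_pos : 0 < delta).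
  { apply Rmin_pos; [lra|]. apply Rdiv_lt_0_compat; [nra|lra]. }
  exists delta. split; [exact delta_pos|].
  intros d D fp gp d_pos D_pos fp_pos gp_pos hd hD hfp hgp.
  apply Rle_lt_trans with (2 * sqrt (delta * C)).
  - apply (is_max_on_dist unit_interval (mixed_speed d D fp gp) (mixed_speed d0 D0 fp0 gp0));
      try apply cstar_inf_is_max; try assumption.
    intros t t_unit.
    apply mixed_speed_dist_le; [exact t_unit|apply Rmin_l|apply Rlt_le; assumption..].
  - apply two_sqrt_lt; [nra|exact eps_pos|].
    assert (delta <= eps ^ 2 / (8 * C)) by apply Rmin_r.
    assert (delta * (8 * C) <= eps ^ 2) by (apply Rmult_le_reg_r with (/ (8 * C));
      [apply Rinv_0_lt_compat; lra| rewrite Rmult_assoc, Rinv_r by lra; lra]).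
    nra.
Qed.

Lemma cstar_inf_monotone_in_D d fp gp : 0 < d -> 0 < fp -> 0 < gp ->
  forall D1 D2, 0 < D1 -> D1 <= D2 -> cstar_inf d D1 fp gp <= cstar_inf d D2 fp gp.
Proof.
  intros d_pos fp_pos gp_pos D1 D2 D1_pos D12.
  apply (is_max_on_le unit_interval (mixed_speed d D1 fp gp) (mixed_speed d D2 fp gp));
    try apply cstar_inf_is_max; try lra.
  intros t t_unit. unfold mixed_speed.
  apply c_f_le; split; try (apply mix_nonneg; auto; lra); try lra.
  apply mix_le_mix_r; assumption.
Qed.

Lemma cstar_inf_div_sqrt_is_max d D fp gp : 0 < d -> 0 < D -> 0 < fp -> 0 < gp ->
  is_max_on unit_interval (mixed_speed (d / D) 1 fp gp) (cstar_inf d D fp gp / sqrt D).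
Proof.
  intros d_pos D_pos fp_pos gp_pos.
  apply (is_max_on_ext _ (fun t => mixed_speed d D fp gp t / sqrt D)).
  - intros t _. rewrite mixed_speed_div_sqrt by exact D_pos.
    rewrite Rdiv_diag by lra. reflexivity.
  - apply is_max_on_div; [apply sqrt_lt_R0, D_pos|apply cstar_inf_is_max; assumption].
Qed.

Lemma cstar_inf_div_sqrt_limit d fp gp : 0 < d -> 0 < fp -> 0 < gp ->
  exists L : R, 0 < L /\
    forall eps : R, 0 < eps -> exists M : R, 0 < M /\
      forall D : R, M < D -> Rabs (cstar_inf d D fp gp / sqrt D - L) < eps.
Proof.
  intros d_pos fp_pos gp_pos.
  destruct (mixed_speed_has_max 0 1 fp gp) as [L Lmax]; try lra.
  exists L. split.
  { apply Rlt_le_trans with (mixed_speed 0 1 fp gp 0); [|apply Lmax; unfold unit_interval; lra].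
    rewrite mixed_speed_0. unfold c_g. rewrite Rmult_1_l.
    apply Rmult_lt_0_compat; [lra|apply sqrt_lt_R0, gp_pos]. }
  intros eps eps_pos.
  set (C := Rabs 0 + Rabs 1 + (Rabs fp + Rabs gp) + 1).
  assert (C_pos : 0 < C) by (unfold C; pose proof (Rabs_pos fp); pose proof (Rabs_pos gp);
                             rewrite Rabs_R0, Rabs_R1; lra).
  exists (Rmax d (4 * d * C / eps ^ 2)). split; [apply Rlt_le_trans with d; [lra|apply Rmax_l]|].
  intros D D_large.
  pose proof (Rmax_l d (4 * d * C / eps ^ 2)); pose proof (Rmax_r d (4 * d * C / eps ^ 2)).
  assert (D_pos : 0 < D) by lra.
  assert (D * (d / D) = d) by (field; lra).
  assert (ratio_le1 : d / D <= 1) by nra.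
  apply Rle_lt_trans with (2 * sqrt (d / D * C)).
  - apply (is_max_on_dist _ _ _ _ _ _
             (cstar_inf_div_sqrt_is_max d D fp gp d_pos D_pos fp_pos gp_pos) Lmax).
    intros t t_unit. apply mixed_speed_dist_le; [exact t_unit|exact ratio_le1|..];
      rewrite ?Rminus_0_r, ?Rminus_diag, ?Rabs_R0, ?Rabs_pos_eq; nra.
  - apply two_sqrt_lt; [nra|exact eps_pos|].
    assert (eps ^ 2 * (4 * d * C / eps ^ 2) = 4 * d * C) by (field; lra).
    assert (0 < eps ^ 2 * (D - 4 * d * C / eps ^ 2)) by (apply Rmult_lt_0_compat; nra).
    nra.
Qed.

Theorem proposition2p9 :
  (forall d D fp gp : R, 0 < d -> 0 < D -> 0 < fp -> 0 < gp ->
     Rmax (c_f d fp) (c_g D gp) <= cstar_inf d D fp gp /\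
     cstar_inf d D fp gp <= 2 * sqrt (Rmax D d * Rmax gp fp) /\
     (cstar_inf d D fp gp < 2 * sqrt (Rmax D d * Rmax gp fp) <->
        ((D > d /\ fp > gp) \/ (D < d /\ fp < gp)))) /\
  (forall d0 D0 fp0 gp0 : R, 0 < d0 -> 0 < D0 -> 0 < fp0 -> 0 < gp0 ->
     forall eps : R, 0 < eps -> exists delta : R, 0 < delta /\
       forall d D fp gp : R, 0 < d -> 0 < D -> 0 < fp -> 0 < gp ->
         Rabs (d - d0) < delta -> Rabs (D - D0) < delta ->
         Rabs (fp - fp0) < delta -> Rabs (gp - gp0) < delta ->
         Rabs (cstar_inf d D fp gp - cstar_inf d0 D0 fp0 gp0) < eps) /\
  (forall d fp gp : R, 0 < d -> 0 < fp -> 0 < gp ->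
     forall D1 D2 : R, 0 < D1 -> D1 <= D2 ->
       cstar_inf d D1 fp gp <= cstar_inf d D2 fp gp) /\
  (forall d fp gp : R, 0 < d -> 0 < fp -> 0 < gp ->
     exists L : R, 0 < L /\
       forall eps : R, 0 < eps -> exists M : R, 0 < M /\
         forall D : R, M < D -> Rabs (cstar_inf d D fp gp / sqrt D - L) < eps).
Proof.
  split; [|split; [|split]].
  - exact cstar_inf_bounds.
  - exact cstar_inf_continuous.
  - exact cstar_inf_monotone_in_D.
  - exact cstar_inf_div_sqrt_limit.
Qed.
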